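(* Let $L\in K[D]$ with $\operatorname{Sym}_L=S_1\cdots S_k$ (homogeneous $S_i$), and let $b_1,\dots,b_k\in K$ with $b_1\cdots b_k=1$, so that also $\operatorname{Sym}_L=(b_1S_1)\cdots(b_kS_k)$. Then the rings of obstacles for the two types coincide: $$K[X]/(\operatorname{Sym}_L/S_1,\dots,\operatorname{Sym}_L/S_k)=K[X]/(\operatorname{Sym}_L/(b_1S_1),\dots,\operatorname{Sym}_L/(b_kS_k)).$$ Moreover, the obstacles coincide: the set of classes in this ring of the symbols of common obstacles to factorization of $L$ of type $(S_1)\cdots(S_k)$ equals the set of classes of the symbols of common obstacles to factorization of $L$ of type $(b_1S_1)\cdots(b_kS_k)$.
   Context: $K$ is a field with commuting derivations $\partial_1,\dots,\partial_n$, and $K[D]=K[D_1,\dots,D_n]$ is the ring of linear differential operators over $K$: the $D_i$ commute with each other and $D_i\circ a=aD_i+\partial_i(a)$ for $a\in K$. Every $L\in K[D]$ is uniquely $\sum_{|J|\le d}a_JD^J$ with $a_J\in K$ and $D^J=D_1^{j_1}\cdots D_n^{j_n}$. The order $\operatorname{ord}(L)$ is the largest $|J|$ with $a_J\ne0$, and $\operatorname{ord}(0)=-\infty$. The symbol $\operatorname{Sym}_L=\sum_{|J|=\operatorname{ord}L}a_JX^J\in K[X]=K[X_1,\dots,X_n]$, with $\operatorname{Sym}_0=0$. A factorization of type $(T_1)\cdots(T_k)$ of an operator $M$ is $M=F_1\circ\cdots\circ F_k$ with $\operatorname{Sym}_{F_i}=T_i$. A common obstacle to factorization of $L$ of type $(T_1)\cdots(T_k)$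 is an operator $R$ such that $L-R$ has a factorization of that type and $R$ has minimal possible order among such operators. The ring of obstacles for type $(T_1)\cdots(T_k)$, where $\operatorname{Sym}_L=T_1\cdots T_k$, is $K[X]/(\operatorname{Sym}_L/T_1,\dots,\operatorname{Sym}_L/T_k)$. The obstacle is the class in this ring of the symbols of common obstacles (these all lie in one class when the $T_i$ are pairwise coprime). *)

From HB Require Import structures.
From mathcomp Require Import all_boot all_order all_algebra.
From mathcomp Require Import mpoly.
Set Implicit Arguments. Unset Strict Implicit. Unset Printing Implicit Defensive.
Import GRing.Theory.
Local Open Scope ring_scope.

Section DiffOps.
Variables (K : fieldType) (n : nat).

Definition comm_derivations (der : 'I_n -> K -> K) : Prop :=
  (forall i a b, der i (a + b) = der i a + der i b) /\
  (forall i a b, der i (a * b) = der i a * b + a * der i b) /\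
  (forall i j a, der i (der j a) = der j (der i a)).

(** An operator [\sum_J a_J D^J] of K[D] is represented by the polynomial
    [\sum_J a_J 'X_[J]] of [{mpoly K[n]}] (coefficient of D^J = coefficient
    of the monomial J); addition and left K-scaling agree. The multiplication
    of K[D] is the composition [dcomp] below, NOT the polynomial product. *)
Definition Dop := {mpoly K[n]}.

Variable der : 'I_n -> K -> K.

(** D_i o Q, using D_i o a = a D_i + der_i a and commutativity of the D's. *)
Definition Di_comp (i : 'I_n) (Q : Dop) : Dop :=
  map_mpoly (der i) Q + 'X_i * Q.

Definition DJ_comp (m : 'X_{1..n}) (Q : Dop) : Dop :=
  foldr (fun i q => iter (m i) (Di_comp i) q) Q (enum 'I_n).

Definition dcomp (P Q : Dop) : Dop :=
  \sum_(m <- msupp P) P@_m *: DJ_comp m Q.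

(** Symbol: the top-order homogeneous part, as an element of K[X].
    (msize L = ord L + 1, and msize 0 = 0 so Sym_0 = 0.) *)
Definition Sym (L : Dop) : {mpoly K[n]} :=
  \sum_(m <- msupp L | mdeg m == (msize L).-1) L@_m *: 'X_[m].

Definition has_factorization k (M : Dop) (T : 'I_k -> {mpoly K[n]}) : Prop :=
  exists F : 'I_k -> Dop,
    (forall i, Sym (F i) = T i) /\ M = \big[dcomp/1]_(i < k) F i.

(** R is a common obstacle to factorization of L of type T: L - R factors
    with that type, and R has minimal order among such operators
    (orders compared through msize = ord + 1, with ord 0 = -oo). *)
Definition common_obstacle k (L : Dop) (T : 'I_k -> {mpoly K[n]}) (R : Dop) :=
  has_factorization (L - R) T /\
  forall R', has_factorization (L - R') T -> (msize R <= msize R')%N.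

End DiffOps.

(** Sym_L / T_i, for Sym_L = T_1 ... T_k, written as the symcofactor
    \prod_{j != i} T_j. *)
Definition symcofactor (K : fieldType) (n k : nat) (T : 'I_k -> {mpoly K[n]}) (i : 'I_k)
  : {mpoly K[n]} := \prod_(j < k | j != i) T j.

Definition in_ideal (K : fieldType) (n k : nat) (g : 'I_k -> {mpoly K[n]})
  (p : {mpoly K[n]}) : Prop :=
  exists c : 'I_k -> {mpoly K[n]}, p = \sum_(i < k) c i * g i.

From HB Require Import structures.
From mathcomp Require Import all_boot all_order all_algebra.
From mathcomp Require Import ssrcomplements mpoly.
Set Implicit Arguments.
Unset Strict Implicit.
Unset Printing Implicit Defensive.

Import GRing.Theory.
Local Open Scope ring_scope.

(* Rescaling the factors of a factorization by constants with product 1 only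
   moves constants between neighbouring factors: if M = F_1 o ... o F_k with
   Sym F_i = S_i, put beta_i = b_(i+1) ... b_k and
   G_i = b_i beta_i F_i o beta_i^-1; then G_1 o ... o G_k = M, and since
   composing on the right with a constant c changes F_i only in orders below
   ord F_i, Sym G_i = b_i S_i. So the same operators factor with either type,
   the common obstacles are literally the same, and each Sym_L/(b_i S_i) is a
   nonzero constant multiple of Sym_L/S_i, so the two ideals coincide.
   Neither the homogeneity of the S_i nor Sym_L = S_1 ... S_k is needed. *)

Lemma prodf_eq1_neq0 (R : idomainType) (I : finType) (b : I -> R) :
  \prod_i b i = 1 -> forall i, b i != 0.
Proof.
move=> prod_b1 i; have /prodf_neq0 : \prod_i b i != 0 by rewrite prod_b1 oner_neq0.
exact.
Qed.

Section MpolySize.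
Variables (R : nzRingType) (n : nat).
Implicit Types (P E : {mpoly R[n]}) (m : 'X_{1..n}).

Lemma mnm_addU_ind (Pm : 'X_{1..n} -> Prop) :
  Pm 0%MM -> (forall m i, Pm m -> Pm (m + U_(i))%MM) -> forall m, Pm m.
Proof.
move=> P0 PS m; have [d] := ubnP (mdeg m); elim: d m => [|d IH] m; rewrite ?ltn0 // => lt_md.
case: (pickP (fun i => 0 < m i)%N) => [i /= mi_gt0 | m_eq0]; last first.
  suff -> : m = 0%MM by [].
  by apply/mnmP=> i; rewrite mnm0E; move/negbT: (m_eq0 i); rewrite lt0n negbK => /eqP.
have le_Um : (U_(i) <= m)%MM by apply/mnm_lepP=> j; rewrite mnm1E; case: eqP => // <-.
rewrite -(submK le_Um); apply/PS/IH.
by move: lt_md; rewrite -{1}(submK le_Um) mdegD mdeg1 addn1 ltnS.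
Qed.

Lemma msize_le_mcoeff d E :
  (forall m, (d <= mdeg m)%N -> E@_m = 0) -> (msize E <= d)%N.
Proof.
move=> E_high; rewrite msizeE; apply/bigmax_leqP_seq => m E_m _.
by rewrite ltnNge; apply: contraL E_m => /E_high E_m0; rewrite mcoeff_msupp E_m0 eqxx.
Qed.

Lemma msize_sum_le (I : eqType) (r : seq I) (F : I -> {mpoly R[n]}) d :
  (forall x, x \in r -> (msize (F x) <= d)%N) -> (msize (\sum_(x <- r) F x) <= d)%N.
Proof.
move=> F_le; apply: leq_trans (mmeasure_sum _ _ _ _) _.
by apply/bigmax_leqP_seq => x r_x _; apply: F_le.
Qed.

Lemma msize_addl P E : (msize E < msize P)%N -> msize (P + E) = msize P.
Proof.
move=> lt_EP; have P_neq0 : P != 0 by apply: contraTneq lt_EP => ->; rewrite msize0.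
have le_PE_P : (msize (P + E) <= msize P)%N.
  by apply: leq_trans (mmeasureD_le _ _ _) _; rewrite geq_max leqnn ltnW.
have E_lead0 : E@_(mlead P) = 0.
  by apply/memN_msupp_eq0/msize_mdeg_ge; rewrite -ltnS (mlead_deg P_neq0).
have lead_PE : mlead P \in msupp (P + E).
  by rewrite mcoeff_msupp mcoeffD E_lead0 addr0 mleadc_eq0.
by apply/eqP; rewrite eqn_leq le_PE_P -(mlead_deg P_neq0) msize_mdeg_lt.
Qed.

Lemma pihomog_msize_le d E : (msize E <= d)%N -> pihomog mdeg d E = 0.
Proof.
move=> le_Ed; rewrite pihomogE big1_seq // => m /andP[/eqP deg_m E_m].
by move: (msize_mdeg_lt E_m); rewrite deg_m ltnNge le_Ed.
Qed.

End MpolySize.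

Section Symbol.
Variables (K : fieldType) (n : nat).
Implicit Types (P E : {mpoly K[n]}) (c : K).

Lemma SymE P : Sym P = pihomog mdeg (msize P).-1 P.
Proof. by []. Qed.

Lemma Sym_addl P E : (msize E < msize P)%N -> Sym (P + E) = Sym P.
Proof.
move=> lt_EP; have P_gt0 : (0 < msize P)%N by apply: leq_ltn_trans lt_EP.
rewrite !SymE msize_addl // raddfD /= [X in _ + X]pihomog_msize_le ?addr0 //.
by rewrite -ltnS prednK.
Qed.

Lemma SymZ c P : Sym (c *: P) = c *: Sym P.
Proof.
have [->|c_neq0] := eqVneq c 0; first by rewrite !scale0r SymE raddf0.
by rewrite !SymE msizeZ // linearZ.
Qed.

End Symbol.

Section DifferentialOperators.
Variables (K : fieldType) (n : nat) (der : 'I_n -> K -> K).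
Hypothesis der_comm : comm_derivations der.
Implicit Types (P Q E X : {mpoly K[n]}) (m : 'X_{1..n}) (c : K).

Local Notation Di := (Di_comp der).
Local Notation DJ := (DJ_comp der).
Local Notation dcomp := (dcomp der).

Lemma derD i : {morph der i : a b / a + b}.
Proof. by move=> a b; case: der_comm. Qed.

Lemma derM i a b : der i (a * b) = der i a * b + a * der i b.
Proof. by case: der_comm => _ []. Qed.

Lemma derC i j a : der i (der j a) = der j (der i a).
Proof. by case: der_comm => _ []. Qed.

Lemma der_is_additive i : additive (der i).
Proof. by move=> a b; apply: (addIr (der i b)); rewrite -derD !subrK. Qed.

HB.instance Definition _ i :=
  GRing.isAdditive.Build K K (der i) (der_is_additive i).

Lemma der0 i : der i 0 = 0.
Proof. exact: raddf0. Qed.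

Lemma mcoeff_map_der i P m : (map_mpoly (der i) P)@_m = der i P@_m.
Proof. exact: mcoeff_map_mpoly. Qed.

Lemma der1 i : der i 1 = 0.
Proof.
have := derM i 1 1; rewrite !mulr1 !mul1r => der11.
by apply: (addrI (der i 1)); rewrite addr0 -der11.
Qed.

Lemma map_derZ i c P :
  map_mpoly (der i) (c *: P) = der i c *: P + c *: map_mpoly (der i) P.
Proof.
by apply/mpolyP=> m; rewrite mcoeffD !mcoeffZ !mcoeff_map_der mcoeffZ derM.
Qed.

Lemma map_derX i m : map_mpoly (der i) 'X_[m] = 0.
Proof.
apply/mpolyP=> m'; rewrite mcoeff_map_der mcoeffX mcoeff0.
by case: eqP; rewrite ?der1 ?der0.
Qed.

Lemma Di_comp_is_additive i : additive (Di i).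
Proof. by move=> P Q; rewrite /Di_comp raddfB mulrBr opprD addrACA. Qed.

HB.instance Definition _ i :=
  GRing.isAdditive.Build _ _ (Di i) (Di_comp_is_additive i).

Lemma Di_compD i : {morph Di i : P Q / P + Q}.
Proof. exact: raddfD. Qed.

Lemma Di_compB i : {morph Di i : P Q / P - Q}.
Proof. exact: raddfB. Qed.

Lemma Di_comp_sum i (I : Type) (r : seq I) (F : I -> {mpoly K[n]}) :
  Di i (\sum_(x <- r) F x) = \sum_(x <- r) Di i (F x).
Proof. exact: raddf_sum. Qed.

Lemma Di_compZ i c Q : Di i (c *: Q) = der i c *: Q + c *: Di i Q.
Proof. by rewrite /Di_comp map_derZ scalerDr -scalerAr addrA. Qed.

Lemma Di_compX i m : Di i 'X_[m] = 'X_[m + U_(i)].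
Proof. by rewrite /Di_comp map_derX add0r mpolyXD mulrC. Qed.

Lemma Di_compC i j Q : Di i (Di j Q) = Di j (Di i Q).
Proof.
rewrite (mpolyE Q) !Di_comp_sum; apply: eq_bigr => m _.
rewrite !Di_compZ !Di_compD !Di_compZ !Di_compX derC -!addrA; congr (_ + _).
rewrite addrCA; congr (_ + (_ + _ *: 'X_[_])).
by apply/mnmP=> k; rewrite !mnmDE addnAC.
Qed.

Definition DJ_on (s : seq 'I_n) m Q := foldr (fun i q => iter (m i) (Di i) q) Q s.

Lemma iter_Di_compC i j k Q : Di j (iter k (Di i) Q) = iter k (Di i) (Di j Q).
Proof. by elim: k => //= k <-; rewrite Di_compC. Qed.

Lemma eq_DJ_on s m1 m2 Q : {in s, m1 =1 m2} -> DJ_on s m1 Q = DJ_on s m2 Q.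
Proof.
elim: s => //= i s IH eq_m; rewrite eq_m ?mem_head // IH // => j s_j.
by apply: eq_m; rewrite in_cons s_j orbT.
Qed.

Lemma DJ_on_addU s m i Q :
  uniq s -> i \in s -> DJ_on s (m + U_(i)) Q = Di i (DJ_on s m Q).
Proof.
elim: s => //= j s IH /andP[j_s s_uniq]; rewrite in_cons mnmDE mnm1E.
have [-> _|_ /= i_s] := eqVneq i j; last by rewrite addn0 IH // iter_Di_compC.
rewrite addn1 /=; congr (Di j (iter _ _ _)); apply: eq_DJ_on => k s_k.
rewrite mnmDE mnm1E; case: eqP => [ik|_]; last by rewrite addn0.
by move: j_s; rewrite ik s_k.
Qed.

Lemma DJ_comp0 Q : DJ 0%MM Q = Q.
Proof. by rewrite /DJ_comp; elim: (enum 'I_n) => //= i s ->; rewrite mnm0E. Qed.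

Lemma DJ_comp_addU m i Q : DJ (m + U_(i)) Q = Di i (DJ m Q).
Proof. by apply: DJ_on_addU; rewrite ?enum_uniq ?mem_enum. Qed.

Lemma dcompE P X : dcomp P X = \sum_(m <- msupp P) P@_m *: DJ m X.
Proof. by []. Qed.

Lemma dcompwE d P X : (msize P <= d)%N ->
  dcomp P X = \sum_(m : 'X_{1..n < d}) P@_m *: DJ m X.
Proof.
move=> le_Pd; pose I : subFinType _ := 'X_{1..n < d}.
rewrite dcompE (big_mksub I) ?msupp_uniq //=; last first.
  by move=> m /msize_mdeg_lt /leq_trans; apply.
by rewrite big_rmcond //= => m /memN_msupp_eq0 ->; rewrite scale0r.
Qed.

Lemma dcompD P Q X : dcomp (P + Q) X = dcomp P X + dcomp Q X.
Proof.
pose d := maxn (msize P) (msize Q).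
rewrite !(@dcompwE d) ?leq_maxl ?leq_maxr ?mmeasureD_le // -big_split.
by apply: eq_bigr => m _; rewrite mcoeffD scalerDl.
Qed.

Lemma dcompZ c P X : dcomp (c *: P) X = c *: dcomp P X.
Proof.
rewrite !(@dcompwE (msize P)) ?msizeZ_le // scaler_sumr.
by apply: eq_bigr => m _; rewrite mcoeffZ scalerA.
Qed.

Lemma dcomp0 X : dcomp 0 X = 0.
Proof. by rewrite (@dcompwE 0) ?msize0 // big1 // => m _; rewrite mcoeff0 scale0r. Qed.

Lemma dcomp_sum (I : Type) (r : seq I) (F : I -> {mpoly K[n]}) X :
  dcomp (\sum_(x <- r) F x) X = \sum_(x <- r) dcomp (F x) X.
Proof. exact: (big_morph (dcomp^~ X) (fun P Q => dcompD P Q X) (dcomp0 X)). Qed.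

Lemma dcompX m X : dcomp 'X_[m] X = DJ m X.
Proof. by rewrite dcompE msuppX big_seq1 mcoeffX eqxx scale1r. Qed.

Lemma dcompC c X : dcomp c%:MP X = c *: X.
Proof. by rewrite -alg_mpolyC -mpolyX0 dcompZ dcompX DJ_comp0. Qed.

Lemma Di_dcomp i P X : Di i (dcomp P X) = dcomp (Di i P) X.
Proof.
rewrite [in RHS](mpolyE P) !Di_comp_sum dcomp_sum.
apply: eq_bigr => m _.
by rewrite !Di_compZ (Di_compX i) dcompD !dcompZ !dcompX DJ_comp_addU.
Qed.

Lemma DJ_dcomp m P X : DJ m (dcomp P X) = dcomp (DJ m P) X.
Proof.
elim/mnm_addU_ind: m => [|m i IH]; first by rewrite !DJ_comp0.
by rewrite !DJ_comp_addU IH Di_dcomp.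
Qed.

Lemma dcompA P Q X : dcomp (dcomp P Q) X = dcomp P (dcomp Q X).
Proof.
rewrite [dcomp P Q]dcompE dcomp_sum [in RHS]dcompE; apply: eq_bigr => m _.
by rewrite dcompZ -DJ_dcomp.
Qed.

Lemma msize_map_der i E : (msize (map_mpoly (der i) E) <= msize E)%N.
Proof.
apply: msize_le_mcoeff => m /msize_mdeg_ge/memN_msupp_eq0 E_m0.
by rewrite mcoeff_map_der E_m0 der0.
Qed.

Lemma msize_mulX i E : (msize ('X_i * E) <= (msize E).+1)%N.
Proof.
have [->|E_neq0] := eqVneq E 0; first by rewrite mulr0 msize0.
have X_neq0 : 'X_i != 0 :> {mpoly K[n]}.
  by rewrite -(mmeasure_poly_eq0 mdeg) (msizeX _ U_(i)%MM).
by rewrite msizeM // (msizeX _ U_(i)%MM) mdeg1.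
Qed.

Lemma msize_Di_comp i E : (msize (Di i E) <= (msize E).+1)%N.
Proof.
apply: leq_trans (mmeasureD_le _ _ _) _; rewrite geq_max msize_mulX andbT.
exact: leq_trans (msize_map_der _ _) _.
Qed.

Lemma msize_DJ_compCB c m : (msize (DJ m c%:MP - c *: 'X_[m]) <= mdeg m)%N.
Proof.
elim/mnm_addU_ind: m => [|m i IH].
  by rewrite DJ_comp0 mpolyX0 alg_mpolyC subrr msize0.
set E := DJ m c%:MP - c *: 'X_[m] in IH *.
have -> : DJ (m + U_(i)) c%:MP - c *: 'X_[m + U_(i)] = Di i E + der i c *: 'X_[m].
  by rewrite DJ_comp_addU /E Di_compB Di_compZ (Di_compX i) opprD addrA addrAC subrK.
rewrite mdegD mdeg1 addn1; apply: leq_trans (mmeasureD_le _ _ _) _.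
rewrite geq_max (leq_trans (msize_Di_comp _ _)) ?ltnS //.
by rewrite (leq_trans (msizeZ_le _ _)) // (msizeX _ m).
Qed.

Lemma msize_dcompCB c P : (msize (dcomp P c%:MP - c *: P) <= (msize P).-1)%N.
Proof.
rewrite {2}(mpolyE P) scaler_sumr dcompE -sumrB; apply: msize_sum_le => m P_m.
rewrite scalerA mulrC -scalerA -scalerBr; apply: leq_trans (msizeZ_le _ _) _.
apply: leq_trans (msize_DJ_compCB c m) _.
by rewrite -ltnS prednK ?msize_mdeg_lt // (leq_ltn_trans _ (msize_mdeg_lt P_m)).
Qed.

Lemma Sym_dcompC c P : c != 0 -> Sym (dcomp P c%:MP) = c *: Sym P.
Proof.
move=> c_neq0; have [->|P_neq0] := eqVneq P 0.
  by rewrite dcomp0 SymE !raddf0.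
rewrite -(subrK (c *: P) (dcomp P c%:MP)) addrC Sym_addl ?SymZ // msizeZ //.
apply: leq_ltn_trans (msize_dcompCB c P) _.
by rewrite ltn_predL lt0n mmeasure_poly_eq0.
Qed.

Lemma rescale_dcomp_big k (F : 'I_k -> Dop K n) (b : 'I_k -> K) :
  (forall i, b i != 0) ->
  exists G : 'I_k -> Dop K n,
    (forall i, Sym (G i) = b i *: Sym (F i)) /\
    \big[dcomp/1]_(i < k) G i = (\prod_(i < k) b i) *: \big[dcomp/1]_(i < k) F i.
Proof.
elim: k F b => [|k IH] F b b_neq0.
  by exists F; split=> [[] //|]; rewrite !big_ord0 scale1r.
have [G [SymG prodG]] :=
  IH (fun i => F (lift ord0 i)) (fun i => b (lift ord0 i)) (fun _ => b_neq0 _).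
set beta := \prod_(i < k) b (lift ord0 i) in prodG *.
have beta_neq0 : beta != 0 by apply/prodf_neq0.
pose G0 := (b ord0 * beta) *: dcomp (F ord0) beta^-1%:MP.
exists (fun i => if unlift ord0 i is Some j then G j else G0); split.
  move=> i; case: unliftP => [j ->|->] //=.
  by rewrite SymZ Sym_dcompC ?invr_neq0 // scalerA mulfK.
rewrite !big_ord_recl unlift_none (eq_bigr G) => [|i _]; last by rewrite liftK.
by rewrite prodG /G0 dcompZ dcompA dcompC scalerA mulVf ?scale1r.
Qed.

Lemma has_factorization_scale k M (T : 'I_k -> {mpoly K[n]}) (b : 'I_k -> K) :
  \prod_(i < k) b i = 1 ->
  has_factorization der M T -> has_factorization der M (fun i => b i *: T i).
Proof.
move=> prod_b1 [F [SymF ->]].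
have [G [SymG prodG]] := rescale_dcomp_big F (prodf_eq1_neq0 prod_b1).
by exists G; split=> [i|]; rewrite ?SymG ?SymF // prodG prod_b1 scale1r.
Qed.

Lemma has_factorization_scaleE k M (T : 'I_k -> {mpoly K[n]}) (b : 'I_k -> K) :
  \prod_(i < k) b i = 1 ->
  has_factorization der M (fun i => b i *: T i) <-> has_factorization der M T.
Proof.
move=> prod_b1; split; last exact: has_factorization_scale.
move=> /(has_factorization_scale (b := fun i => (b i)^-1)).
rewrite prodfV prod_b1 invr1 => /(_ erefl) [F [SymF ->]].
by exists F; split=> // i; rewrite SymF scalerA mulVf ?scale1r // prodf_eq1_neq0.
Qed.

Lemma common_obstacle_scaleE k L (T : 'I_k -> {mpoly K[n]}) (b : 'I_k -> K) R :
  \prod_(i < k) b i = 1 ->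
  common_obstacle der L (fun i => b i *: T i) R <-> common_obstacle der L T R.
Proof.
move=> prod_b1; have scaleE M := has_factorization_scaleE M T prod_b1.
by split=> -[fact_R min_R]; split=> [|R' fact_R']; try apply: min_R; apply/scaleE.
Qed.

End DifferentialOperators.

Section Ideals.
Variables (K : fieldType) (n k : nat).

Lemma in_ideal0 (g : 'I_k -> {mpoly K[n]}) : in_ideal g 0.
Proof. by exists (fun _ => 0); rewrite big1 // => i _; rewrite mul0r. Qed.

Lemma in_ideal_scale (g h : 'I_k -> {mpoly K[n]}) (c : 'I_k -> K) p :
  (forall i, c i != 0) -> (forall i, h i = c i *: g i) ->
  in_ideal h p <-> in_ideal g p.
Proof.
move=> c_neq0 hE; split=> -[a ->].
  by exists (fun i => c i *: a i); apply: eq_bigr => i _; rewrite hE -scalerAr scalerAl.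
exists (fun i => (c i)^-1 *: a i); apply: eq_bigr => i _.
by rewrite hE -scalerAl -scalerAr scalerA mulVf ?scale1r.
Qed.

Lemma symcofactor_scale (S : 'I_k -> {mpoly K[n]}) (b : 'I_k -> K) i :
  symcofactor (fun j => b j *: S j) i = (\prod_(j < k | j != i) b j) *: symcofactor S i.
Proof. exact: scaler_prod. Qed.

End Ideals.

Theorem mainTheorem7 (K : fieldType) (n : nat) (der : 'I_n -> K -> K)
  (Hder : comm_derivations der)
  (k : nat) (L : Dop K n) (S : 'I_k -> {mpoly K[n]}) (b : 'I_k -> K) :
  (forall i, S i \is homog mdeg) ->
  Sym L = \prod_(i < k) S i ->
  \prod_(i < k) b i = 1 ->
  (* the two ideals, hence the two rings of obstacles, coincide *)
  (forall p, in_ideal (symcofactor S) p <->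
             in_ideal (symcofactor (fun i => b i *: S i)) p) /\
  (* the sets of classes of symbols of common obstacles coincide *)
  (forall R, common_obstacle der L S R ->
     exists R', common_obstacle der L (fun i => b i *: S i) R' /\
                in_ideal (symcofactor S) (Sym R - Sym R')) /\
  (forall R', common_obstacle der L (fun i => b i *: S i) R' ->
     exists R, common_obstacle der L S R /\
                in_ideal (symcofactor S) (Sym R - Sym R')).
Proof.
move=> _ _ prod_b1.
have obstacleE R := common_obstacle_scaleE Hder L S R prod_b1.
have cofactor_neq0 i : \prod_(j < k | j != i) b j != 0.
  by apply/prodf_neq0 => j _; exact: (prodf_eq1_neq0 prod_b1).
split; [|split].
- by move=> p; apply: iff_sym; apply: in_ideal_scale cofactor_neq0 (symcofactor_scale S b).
- by move=> R obs_R; exists R; rewrite subrr; split; [apply/obstacleE | apply: in_ideal0].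
- by move=> R obs_R; exists R; rewrite subrr; split; [apply/obstacleE | apply: in_ideal0].
Qed.
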